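(* Let $n\geq 3$, let $X=\mathbb{R}^n$ or $X=S^n$ (the unit sphere in $\mathbb{R}^{n+1}$), and let $\Gamma=\mathrm{Isom}(X)$. Then there exist uncountable sets $W\subset X$ whose pointwise stabilizer in $\Gamma$ is trivial but for which $P(W)$ (with respect to $\Gamma$ and $2$ colors) does not hold; i.e., there is a precoloring $X\setminus W\to\{R,B\}$ admitting no $\Gamma$-distinguishing extension to $X$. In particular $\mathrm{ext}_D(X,\Gamma)=\infty$.
   Context: Let a group $\Gamma$ act faithfully on a set $X$. A coloring $c:X\to\{R,B\}$ is $\Gamma$-distinguishing if the only $\gamma\in\Gamma$ with $c\circ\gamma=c$ is the identity. For $W\subset X$ whose pointwise stabilizer in $\Gamma$ is trivial, the property $P(W)$ holds if every precoloring $c:X\setminus W\to\{R,B\}$ can be extended to a $\Gamma$-distinguishing coloring $X\to\{R,B\}$. The distinguishing extension number $\mathrm{ext}_D(X,\Gamma)$ is the smallest $m$ such that every $W\subset X$ with $|W|\geq m$ and trivial pointwise stabilizer satisfies $P(W)$ ($\infty$ if none exists). *)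

From Stdlib Require Import Reals.
From mathcomp Require Import all_boot.
Set Implicit Arguments.
Unset Strict Implicit.
Unset Printing Implicit Defensive.

Open Scope R_scope.

Definition Rn (n : nat) : Type := 'I_n -> R.

Definition sqnorm (n : nat) (x : Rn n) : R :=
  \big[Rplus/0]_(i < n) Rsqr (x i).

Definition edist (n : nat) (x y : Rn n) : R :=
  sqrt (\big[Rplus/0]_(i < n) Rsqr (x i - y i)).

(* The unit sphere S^n in R^(n+1), with the restricted Euclidean (chordal)
   metric; its isometry group coincides with that for the geodesic metric. *)
Definition Sphere (n : nat) : Type := { x : Rn n.+1 | sqnorm x = 1 }.

Definition sdist (n : nat) (x y : Sphere n) : R := edist (proj1_sig x) (proj1_sig y).

Definition isometry (T : Type) (d : T -> T -> R) (g : T -> T) : Prop :=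
  (forall x y, d (g x) (g y) = d x y) /\ (forall y, exists x, g x = y).

(* Colors: true = R, false = B.  A subset of X is a predicate T -> Prop. *)

Definition distinguishing (T : Type) (Gamma : (T -> T) -> Prop) (c : T -> bool) : Prop :=
  forall g, Gamma g -> (forall x, c (g x) = c x) -> forall x, g x = x.

Definition trivial_pointwise_stabilizer (T : Type) (Gamma : (T -> T) -> Prop)
  (W : T -> Prop) : Prop :=
  forall g, Gamma g -> (forall x, W x -> g x = x) -> forall x, g x = x.

(* Property P(W): every precoloring of X \ W extends to a distinguishing
   coloring.  A precoloring of X \ W is represented by a total c0 : T -> bool,
   of which only the values off W are used. *)
Definition prop_P (T : Type) (Gamma : (T -> T) -> Prop) (W : T -> Prop) : Prop :=
  forall c0 : T -> bool,
    exists c : T -> bool,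
      (forall x, ~ W x -> c x = c0 x) /\ distinguishing Gamma c.

Definition uncountable (T : Type) (W : T -> Prop) : Prop :=
  ~ exists f : nat -> T, forall x, W x -> exists k, f k = x.

Definition card_ge (T M : Type) (W : T -> Prop) : Prop :=
  exists f : M -> T, (forall m, W (f m)) /\ (forall m1 m2, f m1 = f m2 -> m1 = m2).

(* ext_D(X,Gamma) = infinity: no cardinal m (ranging over cardinals <= |X|,
   i.e. types M injecting into T) has the property that every W with |W| >= m
   and trivial pointwise stabilizer satisfies P(W). *)
Definition extD_infinite (T : Type) (Gamma : (T -> T) -> Prop) : Prop :=
  forall M : Type,
    (exists h : M -> T, forall m1 m2, h m1 = h m2 -> m1 = m2) ->
    exists W : T -> Prop,
      card_ge M W /\ trivial_pointwise_stabilizer Gamma W /\ ~ prop_P Gamma W.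

Definition theorem2_conclusion (T : Type) (d : T -> T -> R) : Prop :=
  (exists W : T -> Prop,
      uncountable W /\
      trivial_pointwise_stabilizer (isometry d) W /\
      ~ prop_P (isometry d) W)
  /\ extD_infinite (isometry d).

From HB Require Import structures.
From Stdlib Require Import Reals Lra Lia ZArith.
From Stdlib Require Import Classical ClassicalEpsilon FunctionalExtensionality ProofIrrelevance.
From mathcomp Require Import all_boot perm.
Set Implicit Arguments.
Unset Strict Implicit.
Unset Printing Implicit Defensive.
Open Scope R_scope.

(* Fix two coordinates a != b and let W be the set of points with x_a = x_b = 0, together with
   the unit vectors e_a and e_b (on the sphere: the great (n-2)-sphere x_a = x_b = 0 and the two
   points e_a, e_b).  W contains every unit vector e_i (and 0 in the Euclidean case), and a point
   is determined by its norm and its distances to the e_i, so only the identity fixes W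
   pointwise; W is uncountable as it contains a line (resp. a circle).
   Precolour everything outside W red.  The reflections in x_a = 0 and in x_b = 0 and the
   exchange of x_a and x_b all fix {x_a = x_b = 0} pointwise.  If e_a is red, the reflection in
   x_a = 0 preserves any extension, since it fixes e_b and sends e_a to the red point -e_a;
   likewise if e_b is red; if both are blue, the exchange of e_a and e_b preserves it.  So no
   extension is distinguishing.  Finally X injects into 2^N, which injects into W, so every
   cardinal at most |X| is at most |W|, whence ext_D = oo. *)

Lemma Rplus_associative : associative Rplus.
Proof. by move=> x y z; rewrite Rplus_assoc. Qed.

HB.instance Definition _ :=
  Monoid.isComLaw.Build R 0 Rplus Rplus_associative Rplus_comm Rplus_0_l.

Lemma cantor_diagonal (f : nat -> nat -> bool) : exists b, forall k, f k <> b.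
Proof.
by exists (fun k => ~~ f k k) => k /(congr1 (fun b => b k)); case: (f k k).
Qed.

Lemma uncountable_of_injection T (W : T -> Prop) (i : (nat -> bool) -> T) :
  injective i -> (forall b, W (i b)) -> uncountable W.
Proof.
move=> i_inj Wi [f f_onto].
have inh : inhabited (nat -> bool) by constructor; exact: (fun _ => false).
pose g k := epsilon inh (fun b => i b = f k).
have [b gb] := cantor_diagonal g.
have [k fk] := f_onto _ (Wi b).
apply: (gb k); apply: i_inj; rewrite -fk.
exact: (epsilon_spec inh (fun b => i b = f k) (ex_intro _ b (esym fk))).
Qed.

Lemma theorem2_conclusion_of T d (W : T -> Prop)
    (enc : T -> nat -> bool) (i : (nat -> bool) -> T) :
  injective enc -> injective i -> (forall b, W (i b)) ->
  trivial_pointwise_stabilizer (isometry d) W -> ~ prop_P (isometry d) W ->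
  theorem2_conclusion d.
Proof.
move=> enc_inj i_inj Wi stabW notPW; split.
  by exists W; split=> //; apply: uncountable_of_injection i_inj Wi.
move=> M [h h_inj]; exists W; split=> //.
by exists (fun m => i (enc (h m))); split=> // m1 m2 /i_inj/enc_inj/h_inj.
Qed.

Lemma isometry_of_involution T (d : T -> T -> R) (g : T -> T) :
  involutive g -> (forall x y, d (g x) (g y) = d x y) -> isometry d g.
Proof. by move=> gK dg; split=> // y; exists (g y). Qed.

Section TwoPointObstruction.
Variables (T : Type) (Gamma : (T -> T) -> Prop) (W1 : T -> Prop) (e0 e1 : T).

Let W x := W1 x \/ x = e0 \/ x = e1.

Definition fixing_involution (g : T -> T) :=
  [/\ Gamma g, involutive g & forall x, W1 x -> g x = x].

Lemma involution_preserves_coloring (c : T -> bool) (g : T -> T) :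
  (forall x, ~ W x -> c x = true) -> involutive g -> (forall x, W1 x -> g x = x) ->
  c (g e0) = c e0 -> c (g e1) = c e1 -> forall x, c (g x) = c x.
Proof.
move=> red gK g_fix c0 c1 x.
case: (classic (W x)) => [[/g_fix -> //|[-> //|-> //]]|Wx].
rewrite (red x Wx).
case: (classic (W (g x))) => [[W1gx|[gx|gx]]|Wgx]; last exact: red.
- by case: Wx; left; have := g_fix _ W1gx; rewrite gK => ->.
- by rewrite gx -c0 -gx gK red.
- by rewrite gx -c1 -gx gK red.
Qed.

Lemma not_prop_P_of_involutions (g0 g1 s : T -> T) :
  fixing_involution g0 -> fixing_involution g1 -> fixing_involution s ->
  ~ W (g0 e0) -> g0 e1 = e1 -> g1 e0 = e0 -> ~ W (g1 e1) -> s e0 = e1 -> e0 <> e1 ->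
  ~ prop_P Gamma W.
Proof.
move=> [G0 g0K g0_fix] [G1 g1K g1_fix] [Gs sK s_fix] out0 g0e1 g1e0 out1 se0 e01 PW.
have [c [c_out c_dist]] := PW (fun _ => true).
have red : forall x, ~ W x -> c x = true := c_out.
have e0W : W e0 by right; left.
have e1W : W e1 by right; right.
case c_e0: (c e0).
  suff g0_id : forall x, g0 x = x by apply: out0; rewrite g0_id.
  apply: c_dist (involution_preserves_coloring red g0K g0_fix _ _) => //.
  - by rewrite c_e0 red.
  - by rewrite g0e1.
case c_e1: (c e1).
  suff g1_id : forall x, g1 x = x by apply: out1; rewrite g1_id.
  apply: c_dist (involution_preserves_coloring red g1K g1_fix _ _) => //.
  - by rewrite g1e0.
  - by rewrite c_e1 red.
have se1 : s e1 = e0 by rewrite -se0 sK.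
suff s_id : forall x, s x = x by apply: e01; rewrite -se0 s_id.
apply: c_dist (involution_preserves_coloring red sK s_fix _ _) => //.
- by rewrite se0 c_e0 c_e1.
- by rewrite se1 c_e0 c_e1.
Qed.

End TwoPointObstruction.

(* A code (s, k, N) stands for the rational k / N, negated when s is false (and 0 when N = 0). *)
Definition rat_of_code (q : bool * nat * nat) : R :=
  (if q.1.1 then INR q.1.2 else - INR q.1.2) / INR q.2.

Lemma IZR_signed_nat (z : Z) :
  IZR z = if Z.leb 0 z then INR (Z.abs_nat z) else - INR (Z.abs_nat z).
Proof.
rewrite INR_IZR_INZ Nat2Z.inj_abs_nat abs_IZR.
case: (Z.leb_spec 0 z) => z0; first by rewrite Rabs_right //; apply/Rle_ge/IZR_le.
by rewrite Rabs_left; [lra | apply: IZR_lt].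
Qed.

Lemma rat_of_code_dense x y : x < y -> exists q, x < rat_of_code q < y.
Proof.
move=> xy.
have [N [N_small N_pos]] := archimed_cor1 (y - x) ltac:(lra).
have N_posR : 0 < INR N by apply: lt_0_INR; lia.
have [z_gt z_le] := archimed (INR N * x).
exists (Z.leb 0 (up (INR N * x)), Z.abs_nat (up (INR N * x)), N).
rewrite /rat_of_code /= -IZR_signed_nat.
have cancel_N : INR N * (IZR (up (INR N * x)) / INR N) = IZR (up (INR N * x)).
  by field; lra.
split; apply: (Rmult_lt_reg_l (INR N)); rewrite ?cancel_N //.
have : / INR N * INR N < (y - x) * INR N by apply: Rmult_lt_compat_r.
rewrite Rinv_l; lra.
Qed.

(* The Dedekind cut of [x], read through the enumeration of the rationals by codes. *)
Definition cut_code (x : R) (k : nat) : bool :=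
  if unpickle k is Some q then if Rlt_dec (rat_of_code q) x then true else false
  else false.

Lemma cut_code_inj : injective cut_code.
Proof.
suff cut_lt x y : x < y -> cut_code x <> cut_code y.
  by move=> x y E; case: (Rtotal_order x y) => [/cut_lt|[//|/cut_lt/nesym]].
move=> /rat_of_code_dense [q [xq qy]] /(congr1 (fun f => f (pickle q))).
by rewrite /cut_code pickleK; case: Rlt_dec => a; case: Rlt_dec => b //; lra.
Qed.

Definition vec_code m (x : Rn m) (k : nat) : bool :=
  if unpickle k is Some (i, j) then cut_code (x i) j else false.

Lemma vec_code_inj m : injective (@vec_code m).
Proof.
move=> x y E; apply: functional_extensionality => i; apply: cut_code_inj.
apply: functional_extensionality => j.
by have := congr1 (fun f => f (pickle (i, j))) E; rewrite /vec_code pickleK.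
Qed.

Section TernaryExpansion.
Variable b : nat -> bool.

Definition ternary_digit (k : nat) : R := if b k then (/3) ^ k.+1 else 0.

Fixpoint ternary_sum (N : nat) : R :=
  if N is N'.+1 then ternary_sum N' + ternary_digit N' else 0.

Lemma ternary_digit_ge0 k : 0 <= ternary_digit k.
Proof. by rewrite /ternary_digit; case: (b k); [apply/pow_le; lra | lra]. Qed.

Lemma ternary_sum_mono m j : ternary_sum m <= ternary_sum (m + j).
Proof.
elim: j => [|j IH]; first by rewrite addn0; lra.
by rewrite addnS /=; have := ternary_digit_ge0 (m + j); lra.
Qed.

Lemma ternary_sum_tail m j :
  ternary_sum (m + j) - ternary_sum m <= /2 * (/3) ^ m * (1 - (/3) ^ j).
Proof.
elim: j => [|j IH]; first by rewrite addn0 /=; lra.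
rewrite addnS /= /ternary_digit.
have digit : (/3) ^ (m + j).+1 = (/3) ^ m * (/3) ^ j * /3.
  by rewrite /= pow_add; ring.
have pos_m : 0 < (/3) ^ m by apply: pow_lt; lra.
have pos_j : 0 < (/3) ^ j by apply: pow_lt; lra.
by case: (b (m + j)); rewrite ?digit; nra.
Qed.

Lemma ternary_sum_bound N : 0 <= ternary_sum N <= /2.
Proof.
have := ternary_sum_mono 0 N; have := ternary_sum_tail 0 N; rewrite !add0n /=.
have : 0 < (/3) ^ N by apply: pow_lt; lra.
nra.
Qed.

Let partial_sums x := exists N, x = ternary_sum N.

Lemma partial_sums_bound : bound partial_sums.
Proof. by exists (/2) => _ [N ->]; case: (ternary_sum_bound N). Qed.

Lemma partial_sums_nonempty : exists x, partial_sums x.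
Proof. by exists 0, 0%N. Qed.

Definition cantor_real : R :=
  proj1_sig (completeness partial_sums partial_sums_bound partial_sums_nonempty).

Lemma cantor_real_lub : is_lub partial_sums cantor_real.
Proof. exact: proj2_sig (completeness _ partial_sums_bound partial_sums_nonempty). Qed.

End TernaryExpansion.

Lemma cantor_real_lt (b b' : nat -> bool) k :
  (forall j, (j < k)%N -> b j = b' j) -> b k = true -> b' k = false ->
  cantor_real b' < cantor_real b.
Proof.
move=> b_b' bk b'k.
have same_prefix N : (N <= k)%N -> ternary_sum b N = ternary_sum b' N.
  elim: N => [//|N IH] /= /[dup] /ltnW /IH ->.
  by rewrite /ternary_digit => /b_b' ->.
set P := ternary_sum b k.
have pos_k : 0 < (/3) ^ k.+1 by apply: pow_lt; lra.
have lower : P + (/3) ^ k.+1 <= cantor_real b.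
  by have [ub _] := cantor_real_lub b; apply: ub; exists k.+1; rewrite /= /ternary_digit bk.
have upper : cantor_real b' <= P + /2 * (/3) ^ k.+1.
  have [_ least] := cantor_real_lub b'; apply: least => _ [N ->].
  case: (leqP N k) => [Nk|kN].
    have := ternary_sum_mono b' N (k - N).
    by rewrite subnKC // -(same_prefix k) // -/P; lra.
  have -> : N = (k.+1 + (N - k.+1))%N by rewrite subnKC.
  have := ternary_sum_tail b' k.+1 (N - k.+1).
  have : 0 <= (/3) ^ (N - k.+1) by apply: pow_le; lra.
  have -> : ternary_sum b' k.+1 = P.
    by rewrite /= /ternary_digit b'k -same_prefix // /P; lra.
  nra.
lra.
Qed.

Lemma cantor_real_inj : injective cantor_real.
Proof.
move=> b b' E; apply: functional_extensionality => k0; apply: NNPP => neq.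
have [k bk k_min] := ex_minnP (ex_intro (fun k => b k != b' k) k0 (introN eqP neq)).
have b_b' j : (j < k)%N -> b j = b' j.
  by move=> jk; apply/eqP; apply: contraTT jk => /k_min; rewrite -leqNgt.
move: bk; case bk: (b k); case b'k: (b' k) => // _.
  by have := cantor_real_lt b_b' bk b'k; lra.
by have := cantor_real_lt (fun j jk => esym (b_b' j jk)) b'k bk; lra.
Qed.

Section Coordinates.
Variable m : nat.
Implicit Types (x y : Rn m) (i j k : 'I_m).

Definition origin : Rn m := fun _ => 0.
Definition unit_vec i : Rn m := fun j => if j == i then 1 else 0.
Definition flip i x : Rn m := fun j => if j == i then - x j else x j.
Definition swap i j x : Rn m := fun k => x (tperm i j k).

Lemma sum_sqr_ge0 (F : 'I_m -> R) : 0 <= \big[Rplus/0]_(j < m) Rsqr (F j).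
Proof.
by apply: (big_ind (fun r => 0 <= r)) => [|r s|j _]; [lra | lra | apply: Rle_0_sqr].
Qed.

Lemma sqr_edist x y : Rsqr (edist x y) = \big[Rplus/0]_(j < m) Rsqr (x j - y j).
Proof. exact/Rsqr_sqrt/sum_sqr_ge0. Qed.

Lemma sqnorm_sqr_edist x : sqnorm x = Rsqr (edist x origin).
Proof. by rewrite sqr_edist; apply: eq_bigr => j _; rewrite /origin Rminus_0_r. Qed.

Lemma sqnorm_unit_vec i : sqnorm (unit_vec i) = 1.
Proof.
rewrite /sqnorm (bigD1 i) //= big1 => [|j /negbTE ji]; rewrite /unit_vec ?eqxx ?ji.
- by rewrite Rsqr_1; ring.
- exact: Rsqr_0.
Qed.

Lemma sqr_edist_unit_vec x i : Rsqr (edist x (unit_vec i)) = sqnorm x + 1 - 2 * x i.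
Proof.
rewrite sqr_edist /sqnorm (bigD1 i) // [in RHS](bigD1 i) //= /unit_vec eqxx.
rewrite (eq_bigr (fun j => Rsqr (x j))) => [|j /negbTE ->]; last by rewrite Rminus_0_r.
by rewrite /Rsqr; ring.
Qed.

Lemma coord_eq_of_edist_unit_vec x y i :
  sqnorm y = sqnorm x -> edist y (unit_vec i) = edist x (unit_vec i) -> y i = x i.
Proof.
move=> norm_yx dist_yx; have := sqr_edist_unit_vec y i.
by rewrite dist_yx sqr_edist_unit_vec norm_yx; lra.
Qed.

Lemma flipK i : involutive (flip i).
Proof.
by move=> x; apply: functional_extensionality => j; rewrite /flip; case: eqP => _ //; lra.
Qed.

Lemma swapK i j : involutive (swap i j).
Proof. by move=> x; apply: functional_extensionality => k; rewrite /swap tpermK. Qed.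

Lemma edist_flip i x y : edist (flip i x) (flip i y) = edist x y.
Proof.
rewrite /edist; congr sqrt; apply: eq_bigr => j _.
by rewrite /flip; case: eqP => _ //; rewrite /Rsqr; ring.
Qed.

Lemma sqnorm_flip i x : sqnorm (flip i x) = sqnorm x.
Proof. by apply: eq_bigr => j _; rewrite /flip; case: eqP => _ //; rewrite /Rsqr; ring. Qed.

Lemma edist_swap i j x y : edist (swap i j x) (swap i j y) = edist x y.
Proof. by rewrite /edist /swap [in RHS](reindex_inj (@perm_inj _ (tperm i j))). Qed.

Lemma sqnorm_swap i j x : sqnorm (swap i j x) = sqnorm x.
Proof. by rewrite /sqnorm /swap [in RHS](reindex_inj (@perm_inj _ (tperm i j))). Qed.

Lemma flip_id i x : x i = 0 -> flip i x = x.
Proof.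
move=> xi0; apply: functional_extensionality => j.
by rewrite /flip; case: eqP => // ->; rewrite xi0; lra.
Qed.

Lemma swap_id i j x : x i = x j -> swap i j x = x.
Proof.
by move=> xij; apply: functional_extensionality => k; rewrite /swap; case: tpermP => [->|->|].
Qed.

Lemma flip_unit_vec i : flip i (unit_vec i) i = -1.
Proof. by rewrite /flip /unit_vec eqxx. Qed.

Lemma flip_unit_vec_neq i k : k != i -> flip i (unit_vec k) = unit_vec k.
Proof. by move=> ki; apply: flip_id; rewrite /unit_vec eq_sym (negbTE ki). Qed.

Lemma swap_unit_vec i j : swap i j (unit_vec i) = unit_vec j.
Proof.
apply: functional_extensionality => k.
by rewrite /swap /unit_vec (canF_eq (tpermK i j)) tpermL.
Qed.

End Coordinates.

(* [T] is embedded in R^m by [v] (R^m itself, or the sphere) and is stable under the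
   coordinate reflections and the exchange of the coordinates [a] and [b]. *)
Section AxisPlaneObstruction.
Variables (m : nat) (a b : 'I_m) (T : Type) (v : T -> Rn m).
Variables (unitT : 'I_m -> T) (flipT : 'I_m -> T -> T) (swapT : T -> T).
Hypotheses (ab : a != b) (v_inj : injective v)
  (v_unit : forall i, v (unitT i) = unit_vec i)
  (v_flip : forall i x, v (flipT i x) = flip i (v x))
  (v_swap : forall x, v (swapT x) = swap a b (v x)).

Let d x y := edist (v x) (v y).

Definition axis_plane (x : T) := v x a = 0 /\ v x b = 0.

Definition obstruction_set (x : T) := axis_plane x \/ x = unitT a \/ x = unitT b.

Lemma obstruction_set_unitT i : obstruction_set (unitT i).
Proof.
case: (eqVneq i a) => [->|ia]; first by right; left.
case: (eqVneq i b) => [->|ib]; first by right; right.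
by left; rewrite /axis_plane v_unit /unit_vec eq_sym (negbTE ia) eq_sym (negbTE ib).
Qed.

Lemma unitT_neq : unitT a <> unitT b.
Proof.
by move/(congr1 (fun x => v x a)); rewrite !v_unit /unit_vec eqxx (negbTE ab); lra.
Qed.

Lemma flipT_fixing_involution i : (i == a) || (i == b) ->
  fixing_involution (isometry d) axis_plane (flipT i).
Proof.
move=> iab; have flipTK : involutive (flipT i).
  by move=> x; apply: v_inj; rewrite !v_flip flipK.
split=> // [|x [xa xb]].
  by apply: isometry_of_involution => // x y; rewrite /d !v_flip edist_flip.
by apply: v_inj; rewrite v_flip flip_id //; case/orP: iab => /eqP ->.
Qed.

Lemma swapT_fixing_involution : fixing_involution (isometry d) axis_plane swapT.
Proof.
have swapTK : involutive swapT by move=> x; apply: v_inj; rewrite !v_swap swapK.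
split=> // [|x [xa xb]].
  by apply: isometry_of_involution => // x y; rewrite /d !v_swap edist_swap.
by apply: v_inj; rewrite v_swap swap_id // xa xb.
Qed.

Lemma flipT_unitT_out i : (i == a) || (i == b) -> ~ obstruction_set (flipT i (unitT i)).
Proof.
move=> iab; have coord : v (flipT i (unitT i)) i = -1.
  by rewrite v_flip v_unit flip_unit_vec.
have unit_vec_01 k : unit_vec k i = 0 \/ unit_vec k i = 1.
  by rewrite /unit_vec; case: eqP; [right | left].
case=> [[xa xb]|[E|E]]; move: coord; rewrite ?E ?v_unit.
- by case/orP: iab xa xb => /eqP -> xa xb; lra.
- by case: (unit_vec_01 a) => ->; lra.
- by case: (unit_vec_01 b) => ->; lra.
Qed.

Lemma not_prop_P_obstruction_set : ~ prop_P (isometry d) obstruction_set.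
Proof.
have ba : b != a by rewrite eq_sym.
apply: (not_prop_P_of_involutions (flipT_fixing_involution (i := a) _)
  (flipT_fixing_involution (i := b) _) swapT_fixing_involution); rewrite ?eqxx ?orbT //.
- by apply: flipT_unitT_out; rewrite eqxx ?orbT.
- by apply: v_inj; rewrite v_flip v_unit flip_unit_vec_neq.
- by apply: v_inj; rewrite v_flip v_unit flip_unit_vec_neq.
- by apply: flipT_unitT_out; rewrite eqxx ?orbT.
- by apply: v_inj; rewrite v_swap !v_unit swap_unit_vec.
- exact: unitT_neq.
Qed.

Lemma isometry_fixing_unitT_id g :
  isometry d g -> (forall i, g (unitT i) = unitT i) ->
  (forall x, sqnorm (v (g x)) = sqnorm (v x)) -> forall x, g x = x.
Proof.
move=> [dg _] g_unit g_norm x; apply: v_inj; apply: functional_extensionality => i.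
apply: coord_eq_of_edist_unit_vec => //.
by rewrite -!v_unit -{1}(g_unit i); apply: dg.
Qed.

Lemma obstruction_set_trivial_stabilizer :
  (forall g, isometry d g -> (forall x, obstruction_set x -> g x = x) ->
     forall x, sqnorm (v (g x)) = sqnorm (v x)) ->
  trivial_pointwise_stabilizer (isometry d) obstruction_set.
Proof.
move=> norm_fixed g iso_g g_fix; apply: isometry_fixing_unitT_id => //.
- by move=> i; apply/g_fix/obstruction_set_unitT.
- exact: norm_fixed.
Qed.

End AxisPlaneObstruction.

Definition axis_point m (c : 'I_m) (t : R) : Rn m := fun j => if j == c then t else 0.

Lemma euclidean_conclusion m (a b c : 'I_m) :
  a != b -> a != c -> b != c -> theorem2_conclusion (@edist m).
Proof.
move=> ab ac bc.
apply: (@theorem2_conclusion_of _ _ (obstruction_set a b id (@unit_vec m)) (@vec_code m)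
  (fun bs => axis_point c (cantor_real bs))).
- exact: vec_code_inj.
- by move=> bs bs' /(congr1 (fun x => x c)); rewrite /axis_point eqxx => /cantor_real_inj.
- by move=> bs; left; rewrite /axis_plane /axis_point (negbTE ac) (negbTE bc).
- apply: obstruction_set_trivial_stabilizer => // g [dg _] g_fix x.
  have origin_fixed : g (@origin m) = @origin m by apply: g_fix; left.
  by rewrite !sqnorm_sqr_edist -{1}origin_fixed dg.
- exact: (@not_prop_P_obstruction_set _ _ _ _ _ _ (@flip m) (swap a b)).
Qed.

Definition sphere_point p (x : Rn p.+1) (x_norm : sqnorm x = 1) : Sphere p :=
  exist _ x x_norm.

Lemma sphere_val_inj p : injective (@proj1_sig _ _ : Sphere p -> Rn p.+1).
Proof. by move=> s t; apply: eq_sig_hprop => x; apply: proof_irrelevance. Qed.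

Definition sphere_map p (F : Rn p.+1 -> Rn p.+1)
    (F_norm : forall x, sqnorm (F x) = sqnorm x) (s : Sphere p) : Sphere p :=
  exist _ (F (proj1_sig s)) (eq_trans (F_norm _) (proj2_sig s)).

Definition circle_point p (c e : 'I_p.+1) (t : R) : Rn p.+1 :=
  fun j => if j == c then t / sqrt (1 + t * t)
            else if j == e then 1 / sqrt (1 + t * t) else 0.

Lemma sqnorm_circle_point p (c e : 'I_p.+1) t : c != e -> sqnorm (circle_point c e t) = 1.
Proof.
move=> ce; rewrite /sqnorm (bigD1 c) // (bigD1 e) 1?eq_sym //= big1 => [|j /andP[jc je]].
  rewrite /circle_point eqxx eq_sym (negbTE ce) eqxx.
  have t2 : 0 < 1 + t * t by nra.
  rewrite Rplus_0_r !Rsqr_div' Rsqr_sqrt; last lra.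
  by rewrite /Rsqr; field; lra.
by rewrite /circle_point (negbTE jc) (negbTE je) Rsqr_0.
Qed.

Lemma circle_point_inj p (c e : 'I_p.+1) : c != e -> injective (circle_point c e).
Proof.
move=> ce s t E.
have := congr1 (fun x => x c) E; have := congr1 (fun x => x e) E.
rewrite /circle_point eqxx eq_sym (negbTE ce) eqxx => Ee Ec.
have ratio u : u = (u / sqrt (1 + u * u)) / (1 / sqrt (1 + u * u)).
  by have := sqrt_lt_R0 (1 + u * u) ltac:(nra) => sqrt_pos; field; lra.
by rewrite (ratio s) (ratio t) Ec Ee.
Qed.

Lemma sphere_conclusion p (a b c e : 'I_p.+1) :
  a != b -> a != c -> a != e -> b != c -> b != e -> c != e ->
  theorem2_conclusion (@sdist p).
Proof.
move=> ab ac ae bc be ce.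
pose val : Sphere p -> Rn p.+1 := @proj1_sig _ _.
pose unitS i : Sphere p := sphere_point (sqnorm_unit_vec i).
pose circleS t : Sphere p := sphere_point (sqnorm_circle_point t ce).
apply: (@theorem2_conclusion_of _ _ (obstruction_set a b val unitS)
  (fun s => vec_code (proj1_sig s)) (fun bs => circleS (cantor_real bs))).
- by move=> s t /vec_code_inj/sphere_val_inj.
- by move=> bs bs' /(congr1 (@proj1_sig _ _))/(circle_point_inj ce)/cantor_real_inj.
- move=> bs; left; rewrite /axis_plane /= /circle_point.
  by rewrite (negbTE ac) (negbTE ae) (negbTE bc) (negbTE be).
- apply: obstruction_set_trivial_stabilizer => //; first exact: sphere_val_inj.
  by move=> g _ _ x; move: (proj2_sig x) (proj2_sig (g x)) => /= -> ->.
- exact: (@not_prop_P_obstruction_set _ _ _ _ _ unitS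
    (fun i => sphere_map (@sqnorm_flip _ i)) (sphere_map (@sqnorm_swap _ a b))
    ab (@sphere_val_inj p)).
Qed.

Theorem theorem2 (n : nat) (hn : (3 <= n)%N) :
  theorem2_conclusion (@edist n) /\ theorem2_conclusion (@sdist n).
Proof.
case: n hn => [|[|[|k]]] // _; split.
- apply: (@euclidean_conclusion _ (inord 0) (inord 1) (inord 2));
    by rewrite -(inj_eq val_inj) /= !inordK.
- apply: (@sphere_conclusion _ (inord 0) (inord 1) (inord 2) (inord 3));
    by rewrite -(inj_eq val_inj) /= !inordK.
Qed.
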